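(* Let $G$ be a graph with a string representation $\varphi$ in the plane and let $R$ be a region such that the robber is confined to $G_R$. Suppose there exists a strategy $\mathcal S'$ for some number of cops capturing the robber in $G|_R$ which confines him to $G_R$ throughout. Then there exists a strategy $\mathcal S$ for the same number of cops capturing the robber on $G$, provided the robber is initially confined to $G_R$.
   Context: A string representation assigns to each vertex $v$ a bounded curve $\varphi(v)\subseteq\mathbb{R}^2$ with distinct vertices adjacent iff their curves intersect; finitely many intersection points are assumed. Faces are arc-connected components of the complement of all strings; a region is the closure of a union of faces. A vertex $v$ is contained in $R$ if $\varphi(v)\subseteq\mathrm{int}(R)$; $G_R$ is the subgraph induced by vertices contained in $R$. $G|_R$ is the intersection graph of the arc-connected components of the sets $\varphi(v)\cap R$ (the splits of $v$). Game: cops placed, then robber; alternate moves starting with cops, each stays or moves to an adjacent vertex; capture when a cop occupies the robber's vertex. The robber is confined to a vertex set $D$ if the strategy ensures he is immediately captured upon moving to any vertex outside $D$. *)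

From HB Require Import structures.
From mathcomp Require Import all_boot all_order all_algebra.
From mathcomp Require Import all_classical all_reals all_analysis.
Set Implicit Arguments. Unset Strict Implicit. Unset Printing Implicit Defensive.
Import Order.TTheory GRing.Theory Num.Theory.
Import numFieldNormedType.Exports.
Local Open Scope classical_set_scope.
Local Open Scope ring_scope.

Section Geometry.
Context {R : realType}.
Local Notation plane := (R * R)%type.

Definition sr_path_in (A : set plane) (x y : plane) : Prop :=
  exists f : R -> plane, {within `[0, 1]%classic, continuous f} /\
    f 0 = x /\ f 1 = y /\ f @` `[0, 1]%classic `<=` A.

Definition sr_arc_component (A C : set plane) : Prop :=
  exists x, A x /\ C = [set y | sr_path_in A x y].

Definition sr_is_curve (C : set plane) : Prop :=
  exists f : R -> plane, {within `[0, 1]%classic, continuous f} /\ C = f @` `[0, 1]%classic.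

Definition sr_bounded_plane (A : set plane) : Prop :=
  exists M : R, forall p, A p -> `|p.1| <= M /\ `|p.2| <= M.

Variables (V : finType) (phi : V -> set plane).

Definition sr_string_rep (adj : rel V) : Prop :=
  (forall v, sr_is_curve (phi v) /\ sr_bounded_plane (phi v)) /\
  (forall v, ~~ adj v v) /\
  (forall u v, u != v -> (adj u v <-> phi u `&` phi v !=set0)) /\
  (forall u v, u != v -> finite_set (phi u `&` phi v)).

Definition sr_strings : set plane := \bigcup_(v in [set: V]) phi v.

Definition sr_face (F : set plane) : Prop := sr_arc_component (~` sr_strings) F.

Definition sr_region (Rg : set plane) : Prop :=
  exists Fs : set (set plane), (forall F, Fs F -> sr_face F) /\
    Rg = closure (\bigcup_(F in Fs) F).

(* vertices sr_contained in Rg: the vertex set of G_R *)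
Definition sr_contained (Rg : set plane) : set V :=
  [set v | phi v `<=` interior Rg].

(* the splits: vertices of G|_R *)
Definition sr_split (Rg : set plane) : Type :=
  {p : V * set plane | sr_arc_component (phi p.1 `&` Rg) p.2}.

Definition sr_split_adj (Rg : set plane) (s t : sr_split Rg) : Prop :=
  sval s <> sval t /\ (sval s).2 `&` (sval t).2 !=set0.

Definition sr_split_in_GR (Rg : set plane) : set (sr_split Rg) :=
  [set s | sr_contained Rg (sval s).1].

End Geometry.

Section Game.
Variables (T : Type) (adj : T -> T -> Prop) (k : nat).

Record cop_strategy := CopStrategy {
  s_init : 'I_k -> T;
  s_move : seq (('I_k -> T) * T) -> ('I_k -> T) }.

Variable S : cop_strategy.

(* history up to round t: [(c 0, r 0); ...; (c t, r t)] where c 0 is the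
   initial placement, r 0 the robber's placement, c (t+1) the cops' move
   after seeing the history up to t, r (t+1) the robber's answer *)
Fixpoint history (r : nat -> T) (t : nat) : seq (('I_k -> T) * T) :=
  match t with
  | 0 => [:: (s_init S, r 0)]
  | t'.+1 => let h := history r t' in rcons h (s_move S h, r t)
  end.

Definition cops (r : nat -> T) (t : nat) : 'I_k -> T :=
  (last (s_init S, r 0) (history r t)).1.

Definition robber_legal (r : nat -> T) : Prop :=
  forall t, r t.+1 = r t \/ adj (r t) (r t.+1).

Definition cop_step_legal (r : nat -> T) (t : nat) : Prop :=
  forall i, cops r t.+1 i = cops r t i \/ adj (cops r t i) (cops r t.+1 i).

Definition captured_at (r : nat -> T) (t : nat) : Prop :=
  exists i, cops r t i = r t \/ cops r t.+1 i = r t.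

Definition captures (A : set T) : Prop :=
  forall r, robber_legal r -> A (r 0) ->
    exists t, captured_at r t /\ forall t', (t' <= t)%N -> cop_step_legal r t'.

Definition confines (D : set T) : Prop :=
  forall r, robber_legal r -> forall t,
    (forall t', (t' < t)%N -> ~ captured_at r t') ->
    ~ D (r t) -> captured_at r t.

End Game.

From HB Require Import structures.
From mathcomp Require Import all_boot all_order all_algebra.
From mathcomp Require Import all_classical all_reals all_analysis.
From mathcomp Require Import lra.
Set Implicit Arguments. Unset Strict Implicit. Unset Printing Implicit Defensive.
Import Order.TTheory GRing.Theory Num.Theory.
Import numFieldNormedType.Exports.
Local Open Scope classical_set_scope.

(* The cops on G simulate S' against a shadow robber on G|_R.  While the real
   robber stays in G_R, his shadow is the split of his current vertex through a
   point shared with his previous vertex; as the whole string of a vertex of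
   G_R lies in R and is arc-connected, this split contains the whole string, so
   consecutive shadows are adjacent or equal.  The cops play the vertices of
   the splits occupied by S'.  Hence a capture of the shadow projects to a
   capture of the robber, and when the robber leaves G_R his shadow leaves the
   splits of G_R, so that the confinement property of S' catches him there. *)

Section History.
Variables (T : Type) (k : nat) (S : cop_strategy T k).

Lemma size_history r t : size (history S r t) = t.+1.
Proof. by elim: t => //= t IH; rewrite size_rcons IH. Qed.

Lemma nth_history r t i d : (i <= t)%N -> (nth d (history S r t) i).2 = r i.
Proof.
elim: t => [|t IH] /=; first by rewrite leqn0 => /eqP ->.
rewrite nth_rcons size_history leq_eqVlt => /orP[/eqP->|lt_it].
  by rewrite ltnn eqxx.
by rewrite lt_it IH.
Qed.

Lemma copsS r t : cops S r t.+1 = s_move S (history S r t).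
Proof. by rewrite /cops /= last_rcons. Qed.

Lemma eq_history r1 r2 t : (forall i, (i <= t)%N -> r1 i = r2 i) ->
  history S r1 t = history S r2 t.
Proof.
elim: t => [|t IH] eq_r /=; first by rewrite eq_r.
by rewrite IH ?eq_r // => i le_it; apply: eq_r; exact: leqW.
Qed.

Lemma eq_cops r1 r2 t : (forall i, (i < t)%N -> r1 i = r2 i) ->
  cops S r1 t = cops S r2 t.
Proof. by case: t => [|t] eq_r //; rewrite !copsS (eq_history (r2 := r2)). Qed.

End History.

Section Paths.
Local Open Scope ring_scope.
Variable R : realType.
Local Notation plane := (R * R)%type.

Lemma within_continuous_precomp (U : topologicalType) (A : set R)
    (f : R -> U) (h : R -> R) :
  continuous h -> {homo h : x / A x} -> {within A, continuous f} ->
  {within A, continuous (f \o h)}.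
Proof.
move=> hc hA /subspace_continuousP fc; apply/subspace_continuousP => x Ax.
apply: (@cvg_comp _ _ _ h f _ (within A (nbhs (h x)))); last exact: fc (hA _ Ax).
move=> W /= W_near; have := hc x _ W_near; rewrite nbhs_simpl /=.
by apply: filterS => y Wy Ay; exact: Wy (hA _ Ay).
Qed.

Lemma sr_path_in_refl (A : set plane) p : A p -> sr_path_in A p p.
Proof.
move=> Ap; exists (fun=> p); split; first exact/continuous_subspaceT/cst_continuous.
by do 2 split => //; move=> _ [x _ <-].
Qed.

Lemma sr_path_in_sub (A B : set plane) p q :
  A `<=` B -> sr_path_in A p q -> sr_path_in B p q.
Proof.
by move=> AB [f [fc [f0 [f1 fA]]]]; exists f; do 3 split => //; exact: subset_trans AB.
Qed.

Lemma sr_path_in_end (A : set plane) p q : sr_path_in A p q -> A q.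
Proof.
move=> [f [_ [_ [<- fA]]]]; apply: fA; exists 1 => //=.
by rewrite in_itv /= ler01 lexx.
Qed.

Lemma sr_curve_path_in (C : set plane) p q :
  sr_is_curve C -> C p -> C q -> sr_path_in C p q.
Proof.
move=> [f [fc ->]] [a a01 <-] [b b01 <-].
pose h x := a + x * (b - a).
have h01 : {homo h : x / `[0, 1]%classic x}.
  move: a01 b01 => /=; rewrite !in_itv /= => /andP[a0 a1] /andP[b0 b1] x.
  rewrite /= !in_itv /= /h => /andP[x0 x1]; apply/andP; split; nra.
exists (f \o h); split.
  apply: within_continuous_precomp => // x.
  by apply: cvgD; [exact: cvg_cst | apply: cvgMr_tmp; exact: cvg_id].
rewrite /= /h mul0r mul1r addr0 addrC subrK; do 2 split => //.
by move=> _ [x x01 <-]; exists (h x) => //; exact: h01.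
Qed.

End Paths.

Section Splits.
Local Open Scope ring_scope.
Variables (R : realType) (V : finType) (adj : rel V)
  (phi : V -> set (R * R)%type) (Rg : set (R * R)%type).
Hypothesis phi_rep : sr_string_rep phi adj.
Local Notation plane := (R * R)%type.
Local Notation split := (sr_split phi Rg).
Local Notation split_adj := (@sr_split_adj R V phi Rg).
Local Notation split_in_GR := (@sr_split_in_GR R V phi Rg).

Definition split_vertex (s : split) : V := (sval s).1.

Definition arc_comp v (p : plane) : set plane :=
  [set q | sr_path_in (phi v `&` Rg) p q].

Lemma arc_comp_component v p :
  (phi v `&` Rg) p -> sr_arc_component (phi v `&` Rg) (arc_comp v p).
Proof. by exists p. Qed.

Lemma split_sub (s : split) : (sval s).2 `<=` phi (split_vertex s).
Proof. by rewrite /split_vertex; case: s => [[v C]] /= [p [_ ->]] q /sr_path_in_end []. Qed.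

Lemma contained_sub v : sr_contained phi Rg v -> phi v `<=` Rg.
Proof. by move=> v_in p /v_in /interior_subset. Qed.

Lemma contained_arc_comp v p :
  sr_contained phi Rg v -> phi v p -> phi v `<=` arc_comp v p.
Proof.
move=> v_in vp q vq; apply: (@sr_path_in_sub _ (phi v)).
  by move=> x vx; split => //; exact: contained_sub vx.
exact: sr_curve_path_in (phi_rep.1 v).1 vp vq.
Qed.

Lemma sr_adjP u w : u != w -> adj u w <-> phi u `&` phi w !=set0.
Proof. by have [_ [_ [adjP _]]] := phi_rep; exact: adjP. Qed.

Lemma split_adj_vertex (s t : split) : split_adj s t ->
  split_vertex s = split_vertex t \/ adj (split_vertex s) (split_vertex t).
Proof.
move=> [_ [p [sp tp]]].
have [->|neq_st] := eqVneq (split_vertex s) (split_vertex t); first by left.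
by right; apply/(sr_adjP neq_st); exists p; split; exact: split_sub.
Qed.

Definition string_point v : plane := xget (0, 0) (phi v).

Lemma string_pointP v : phi v (string_point v).
Proof.
apply: xgetPex; have [[f [_ ->]] _] := phi_rep.1 v.
by exists (f 0), 0 => //=; rewrite in_itv /= lexx ler01.
Qed.

Definition string_split v (v_in : sr_contained phi Rg v) : split :=
  exist _ (v, arc_comp v (string_point v))
    (arc_comp_component (conj (string_pointP v) (contained_sub v_in (string_pointP v)))).

Definition meet_point u w : plane := xget (0, 0) (phi u `&` phi w).

Lemma meet_pointP u w : adj u w -> (phi u `&` phi w) (meet_point u w).
Proof.
move=> uw; have neq_uw : u != w by apply: (contraTneq _ uw) => ->; exact: phi_rep.2.1.
by apply: xgetPex; apply/(sr_adjP neq_uw).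
Qed.

Lemma robber_stepP r t : robber_legal adj r -> r t.+1 != r t -> adj (r t) (r t.+1).
Proof. by move=> /(_ t)[->|//]; rewrite eqxx. Qed.

Section Shadow.
Variable s0 : split.

(* [s0] is only a junk value: [split_at] is always applied to points of [Rg]. *)
Definition split_at v p : split :=
  match pselect ((phi v `&` Rg) p) with
  | left vp => exist _ (v, arc_comp v p) (arc_comp_component vp)
  | right _ => s0
  end.

Lemma split_atE v p : phi v p -> Rg p -> sval (split_at v p) = (v, arc_comp v p).
Proof. by move=> vp Rp; rewrite /split_at; case: pselect => // -[]. Qed.

Definition inside_upto (r : nat -> V) t :=
  forall t', (t' <= t)%N -> sr_contained phi Rg (r t').

Fixpoint shadow (r : nat -> V) t : split :=
  match t with
  | 0 => split_at (r 0) (string_point (r 0))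
  | t'.+1 => if `[< inside_upto r t' >] && (r t != r t')
             then split_at (r t) (meet_point (r t') (r t)) else shadow r t'
  end.

Lemma inside_upto_pred r t : inside_upto r t.+1 -> inside_upto r t.
Proof. by move=> r_in t' le_t't; apply: r_in; exact: leqW. Qed.

Lemma shadow_step r t : robber_legal adj r -> inside_upto r t -> r t.+1 != r t ->
  sval (shadow r t.+1) = (r t.+1, arc_comp (r t.+1) (meet_point (r t) (r t.+1))).
Proof.
move=> r_legal r_in neq_r /=; rewrite asboolT // neq_r.
have [rt rt1] := meet_pointP (robber_stepP r_legal neq_r).
by rewrite split_atE //; exact: contained_sub (r_in t (leqnn _)) _ rt.
Qed.

Lemma shadow_inside r t : robber_legal adj r -> inside_upto r t ->
  split_vertex (shadow r t) = r t /\ phi (r t) `<=` (sval (shadow r t)).2.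
Proof.
move=> r_legal; elim: t => [|t IH] r_in.
  have [r0_in r0p] := (r_in 0%N (leqnn _), string_pointP (r 0%N)).
  rewrite /split_vertex split_atE //; last exact: contained_sub r0_in _ r0p.
  by split => //; exact: contained_arc_comp r0_in r0p.
have [eq_r|neq_r] := eqVneq (r t.+1) (r t).
  by rewrite /= eq_r eqxx andbF; exact/IH/inside_upto_pred.
rewrite /split_vertex shadow_step //; last exact: inside_upto_pred.
split => //; apply: contained_arc_comp; first exact: r_in.
by case: (meet_pointP (robber_stepP r_legal neq_r)).
Qed.

Lemma shadow_next r t : robber_legal adj r -> inside_upto r t ->
  split_vertex (shadow r t.+1) = r t.+1.
Proof.
move=> r_legal r_in; have [eq_r|neq_r] := eqVneq (r t.+1) (r t).
  by rewrite /= eq_r eqxx andbF; exact: (shadow_inside r_legal r_in).1.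
by rewrite /split_vertex shadow_step.
Qed.

Lemma shadow_legal r : robber_legal adj r -> robber_legal split_adj (shadow r).
Proof.
move=> r_legal t; have [r_in|] := boolP `[< inside_upto r t >]; last first.
  by move=> /negbTE /= ->; left.
move/asboolP: r_in => r_in.
have [eq_r|neq_r] := eqVneq (r t.+1) (r t); first by rewrite /= eq_r eqxx andbF; left.
have [rt rt1] := meet_pointP (robber_stepP r_legal neq_r).
have [vertex_t sub_t] := shadow_inside r_legal r_in.
right; split; rewrite shadow_step //.
  by move=> eq_s; move: vertex_t neq_r; rewrite /split_vertex eq_s /= => ->; rewrite eqxx.
exists (meet_point (r t) (r t.+1)); split; first exact: sub_t.
apply: sr_path_in_refl; split => //.
exact: contained_sub (r_in t (leqnn _)) _ rt.
Qed.

Lemma eq_shadow r1 r2 t : (forall i, (i <= t)%N -> r1 i = r2 i) ->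
  shadow r1 t = shadow r2 t.
Proof.
elim: t => [|t IH] eq_r; first by rewrite /= eq_r.
have eq_r' i : (i <= t)%N -> r1 i = r2 i by move=> le_it; apply/eq_r/leqW.
have eq_inside : inside_upto r1 t = inside_upto r2 t.
  by apply/propext; split => r_in i le_it; [rewrite -eq_r' | rewrite eq_r']; auto.
by rewrite /= eq_inside IH // eq_r // eq_r'.
Qed.

Variables (k : nat) (S' : cop_strategy split k).

Definition robber_of_history (h : seq (('I_k -> V) * V)) (t : nat) : V :=
  (nth (fun=> split_vertex s0, split_vertex s0) h t).2.

(* The moves of S' are recomputed from the robber's history replayed as a
   shadow; this is well defined because the shadow only depends on the past. *)
Definition projected_strategy : cop_strategy V k :=
  CopStrategy (fun i => split_vertex (s_init S' i))
    (fun h i => split_vertex (cops S' (shadow (robber_of_history h)) (size h) i)).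

Lemma projected_cops r t :
  cops projected_strategy r t = fun i => split_vertex (cops S' (shadow r) t i).
Proof.
case: t => [|t] //; rewrite copsS /= size_history.
rewrite (@eq_cops _ _ S' _ (shadow r)) // => i lt_it; apply: eq_shadow => j le_ji.
by rewrite /robber_of_history nth_history //; exact: leq_trans le_ji _.
Qed.

Lemma projected_step_legal r t : cop_step_legal split_adj S' (shadow r) t ->
  cop_step_legal (fun u v => adj u v) projected_strategy r t.
Proof.
move=> S'_legal i; rewrite !projected_cops.
by case: (S'_legal i) => [->|/split_adj_vertex]; [left | case=> ->; [left | right]].
Qed.

Lemma projected_captured_at r t : split_vertex (shadow r t) = r t ->
  captured_at S' (shadow r) t -> captured_at projected_strategy r t.
Proof.
move=> vertex_t [i caught]; exists i; rewrite !projected_cops -vertex_t.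
by case: caught => ->; [left | right].
Qed.

(* Consider the first time at which the shadow is caught or the robber is
   outside G_R: up to then the robber was in G_R, so the shadow tracks him, and
   if he is outside G_R, confinement forces the capture of the shadow. *)
Lemma projected_captures :
  captures split_adj S' setT ->
  confines split_adj S' split_in_GR ->
  captures (fun u v => adj u v) projected_strategy (sr_contained phi Rg).
Proof.
move=> S'_captures S'_confines r r_legal r0_in.
have [t [caught_t S'_legal]] := S'_captures _ (shadow_legal r_legal) I.
pose P e := `[< captured_at S' (shadow r) e \/ ~ sr_contained phi Rg (r e) >].
have exP : exists e, P e by exists t; apply/asboolP; left.
case: (ex_minnP exP) => e /asboolP P_e e_min.
have le_et : (e <= t)%N by apply/e_min/asboolP; left.
have before_e t' : (t' < e)%N -> ~ captured_at S' (shadow r) t' /\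
    sr_contained phi Rg (r t').
  move=> lt_t'e; have not_P : ~ P t' by move/e_min; rewrite leqNgt lt_t'e.
  split => [caught|]; first by apply: not_P; apply/asboolP; left.
  by apply: contrapT => out; apply: not_P; apply/asboolP; right.
have tracked : split_vertex (shadow r e) = r e.
  case: e {P_e e_min le_et} before_e => [|e] before_e.
    by apply: (shadow_inside r_legal _).1 => -[].
  by apply: shadow_next => // t' le_t'e; apply: (before_e t' _).2.
exists e; split; last by move=> t' le_t'e; apply/projected_step_legal/S'_legal/(leq_trans le_t'e).
apply: projected_captured_at => //.
case: P_e => [//|out]; apply: S'_confines (shadow_legal r_legal) _ _ _.
  by move=> t' /before_e [].
by rewrite /sr_split_in_GR /= -/(split_vertex _) tracked.
Qed.

End Shadow.
End Splits.

Theorem lemma11 (R : realType) (V : finType) (adj : rel V)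
    (phi : V -> set (R * R)%type) (Rg : set (R * R)%type) (k : nat) :
  sr_string_rep phi adj -> sr_region phi Rg ->
  (exists S' : cop_strategy (sr_split phi Rg) k,
     captures (@sr_split_adj R V phi Rg) S' setT /\
     confines (@sr_split_adj R V phi Rg) S' (@sr_split_in_GR R V phi Rg)) ->
  exists S : cop_strategy V k,
    captures (fun u v => adj u v) S (sr_contained phi Rg).
Proof.
(* Only the containment of strings in the interior of [Rg] matters, not that
   [Rg] is a region. *)
move=> phi_rep _ [S' [S'_captures S'_confines]].
have [[v v_in]|no_contained] := pselect (exists v, sr_contained phi Rg v).
  exists (projected_strategy (string_split phi_rep v_in) S').
  exact: projected_captures.
exists (CopStrategy (fun i => split_vertex (s_init S' i)) (fun _ i => split_vertex (s_init S' i))).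
by move=> r _ r0_in; case: no_contained; exists (r 0%N).
Qed.
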